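(* Let $A$ be a complex $2\times 2$ matrix with $\det(A)=1$, and let $A=PU$ be its polar decomposition, where $P$ is a positive definite Hermitian matrix and $U$ is unitary. Then $A+(A^{\mathbf c})^*$ is a nonzero real multiple of $U$; that is, $\varkappa^\circ([A]_{\mathbb{C}^*})=[A+(A^{\mathbf c})^*]_{\mathbb{R}^*}$, and this class lies in $PSU(2)$.
   Context: For a complex $2\times 2$ matrix $B=\begin{pmatrix}a&b\\ c&d\end{pmatrix}$ write $B^{\mathbf c}=\begin{pmatrix}d&-b\\ -c&a\end{pmatrix}$ and let $B^*$ denote the conjugate transpose. $\mathbb{C}P^3$ is the projectivization of the space of complex $2\times 2$ matrices; $[B]_{\mathbb{C}^*}$ denotes the class of a nonzero matrix up to nonzero complex scalars, and $[B]_{\mathbb{R}^*}$ the class up to nonzero real scalars. $PSL_2(\mathbb{C})\subset\mathbb{C}P^3$ is the set of classes with nonzero determinant, and $PSU(2)=\{[U]_{\mathbb{C}^*}: U\in SU(2)\}\subset PSL_2(\mathbb{C})$. The spherical coamoeba map $\varkappa^\circ\colon PSL_2(\mathbb{C})\to PSU(2)$ sends $[A]_{\mathbb{C}^*}$, with the representative $A$ chosen so that $\det(A)=1$, to the class of the unitary factor $U$ in the polar decomposition $A=PU$. *)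

From HB Require Import structures.
From mathcomp Require Import all_boot all_order all_algebra.
From mathcomp Require Import complex.
Set Implicit Arguments. Unset Strict Implicit. Unset Printing Implicit Defensive.
Import Order.TTheory GRing.Theory Num.Theory.
Local Open Scope ring_scope.
Local Open Scope complex_scope.

Definition ctmx (R : rcfType) (m n : nat) (B : 'M[R[i]]_(m, n)) : 'M[R[i]]_(n, m) :=
  (map_mx (@conjc R) B)^T.

(* B^c = [[d, -b], [-c, a]] for B = [[a, b], [c, d]] *)
Definition cmx (R : rcfType) (B : 'M[R[i]]_2) : 'M[R[i]]_2 :=
  \matrix_(i, j) if i == j then B (rev_ord i) (rev_ord j) else - B i j.

Definition hermitian2 (R : rcfType) (P : 'M[R[i]]_2) : Prop := ctmx P = P.

Definition posdef2 (R : rcfType) (P : 'M[R[i]]_2) : Prop :=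
  forall v : 'cV[R[i]]_2, v != 0 -> 0 < (ctmx v *m P *m v) ord0 ord0.

Definition unitary2 (R : rcfType) (U : 'M[R[i]]_2) : Prop := U *m ctmx U = 1%:M.

(** Since [det P > 0] and [|det U| = 1], the identity [det P * det U = 1] forces
    [det U = 1].  For a 2x2 matrix, [M^c M = det M] and [M + M^c = tr M], so
    [U^c = U^*] and, [P] being Hermitian, [(A^c)^* = (U^c P^c)^* = P^c U].
    Hence [A + (A^c)^* = (P + P^c) U = tr P * U], and [tr P > 0]. *)
From HB Require Import structures.
From mathcomp Require Import all_boot all_order all_algebra.
From mathcomp Require Import complex.
From mathcomp Require Import ring.
Import Order.TTheory GRing.Theory Num.Theory.
Local Open Scope ring_scope.
Local Open Scope complex_scope.

Section ConjugateTranspose.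
Context {R : rcfType}.

Lemma ctmxE m n (M : 'M[R[i]]_(m, n)) i j : ctmx M i j = (M j i)^*.
Proof. by rewrite !mxE. Qed.

Lemma ctmx_mul m n p (M : 'M[R[i]]_(m, n)) (N : 'M[R[i]]_(n, p)) :
  ctmx (M *m N) = ctmx N *m ctmx M.
Proof. by rewrite /ctmx map_mxM trmx_mul. Qed.

Lemma ctmxK m n (M : 'M[R[i]]_(m, n)) : ctmx (ctmx M) = M.
Proof. by apply/matrixP => i j; rewrite !ctmxE conjcK. Qed.

Lemma det_ctmx n (M : 'M[R[i]]_n) : \det (ctmx M) = (\det M)^*.
Proof. by rewrite det_tr det_map_mx. Qed.

End ConjugateTranspose.

Section TwoByTwo.
Context {R : rcfType}.
Implicit Types M N P U : 'M[R[i]]_2.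

Lemma ord2P (i : 'I_2) : i = 0 \/ i = 1.
Proof. by case: i => [[|[|//]] ?]; [left|right]; apply: val_inj. Qed.

Lemma lift_ord2 (i : 'I_2) (j : 'I_1) : lift i j = if val i == 0%N then 1 else 0.
Proof. by apply: val_inj; case: i j => [[|[|//]] ?] [[|//] ?]. Qed.

Lemma mx2P M N :
  M 0 0 = N 0 0 -> M 0 1 = N 0 1 -> M 1 0 = N 1 0 -> M 1 1 = N 1 1 -> M = N.
Proof.
move=> e00 e01 e10 e11; apply/matrixP => i j.
by case: (ord2P i) => ->; case: (ord2P j) => ->.
Qed.

Lemma mulmx2E m n (M : 'M[R[i]]_(m, 2)) (N : 'M[R[i]]_(2, n)) i j :
  (M *m N) i j = M i 0 * N 0 j + M i 1 * N 1 j.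
Proof. by rewrite mxE !big_ord_recl big_ord0 addr0 lift_ord2. Qed.

Lemma det_mx2 M : \det M = M 0 0 * M 1 1 - M 0 1 * M 1 0.
Proof.
rewrite (expand_det_row _ 0) !big_ord_recl big_ord0 /cofactor !det_mx11.
by rewrite !mxE !lift_ord2 /= expr0 expr1; ring.
Qed.

Lemma mxtrace_mx2 M : \tr M = M 0 0 + M 1 1.
Proof. by rewrite /mxtrace !big_ord_recl big_ord0 addr0 lift_ord2. Qed.

Lemma cmxE M : [/\ cmx M 0 0 = M 1 1, cmx M 0 1 = - M 0 1,
                   cmx M 1 0 = - M 1 0 & cmx M 1 1 = M 0 0].
Proof.
have r0 : rev_ord (0 : 'I_2) = 1 by apply: val_inj.
have r1 : rev_ord (1 : 'I_2) = 0 by apply: val_inj.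
by rewrite !mxE /= r0 r1.
Qed.

Lemma cmx_mul M N : cmx (M *m N) = cmx N *m cmx M.
Proof.
have [a00 a01 a10 a11] := cmxE (M *m N).
have [b00 b01 b10 b11] := cmxE M; have [c00 c01 c10 c11] := cmxE N.
by apply: mx2P; rewrite ?a00 ?a01 ?a10 ?a11 !mulmx2E
  ?b00 ?b01 ?b10 ?b11 ?c00 ?c01 ?c10 ?c11; ring.
Qed.

Lemma mul_cmx_mx M : cmx M *m M = (\det M)%:M.
Proof.
have [c00 c01 c10 c11] := cmxE M.
by apply: mx2P; rewrite mulmx2E ?c00 ?c01 ?c10 ?c11 !mxE det_mx2 /= ?mulr1n ?mulr0n;
  ring.
Qed.

Lemma addmx_cmx M : M + cmx M = (\tr M)%:M.
Proof.
have [c00 c01 c10 c11] := cmxE M.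
by apply: mx2P; rewrite mxE ?c00 ?c01 ?c10 ?c11 !mxE mxtrace_mx2 /= ?mulr1n ?mulr0n;
  ring.
Qed.

Lemma ctmx_cmx M : ctmx (cmx M) = cmx (ctmx M).
Proof.
have [c00 c01 c10 c11] := cmxE M; have [d00 d01 d10 d11] := cmxE (ctmx M).
by apply: mx2P; rewrite ctmxE ?c00 ?c01 ?c10 ?c11 ?d00 ?d01 ?d10 ?d11 ?ctmxE ?rmorphN.
Qed.

Lemma cmx_unitary2 {U} : unitary2 U -> \det U = 1 -> cmx U = ctmx U.
Proof. by move=> UU1 detU1; rewrite -[cmx U]mulmx1 -UU1 mulmxA mul_cmx_mx detU1 mul1mx. Qed.

Lemma ctmx_cmx_mul_hermitian2 P U :
  hermitian2 P -> cmx U = ctmx U -> ctmx (cmx (P *m U)) = cmx P *m U.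
Proof. by move=> hermP cmxU; rewrite cmx_mul ctmx_mul ctmx_cmx hermP cmxU ctmxK. Qed.

Lemma normr_det_unitary2 {U} : unitary2 U -> `|\det U| = 1.
Proof.
move=> UU1; apply/eqP; rewrite -(pexpr_eq1 (n := 2)) ?normr_ge0 // sqr_normc.
by rewrite -det_ctmx -det_mulmx UU1 det1.
Qed.

Lemma posdef2_diag_gt0 {P} i : posdef2 P -> 0 < P i i.
Proof.
move=> posP; have /posP : delta_mx i 0 != 0 :> 'cV[R[i]]_2.
  by apply/eqP => /matrixP /(_ i 0); rewrite !mxE !eqxx; apply/eqP; rewrite oner_eq0.
congr (0 < _); rewrite !mulmx2E !ctmxE !mxE !conjc_nat.
by case: (ord2P i) => -> /=; ring.
Qed.

Lemma posdef2_mxtrace_gt0 {P} : posdef2 P -> 0 < \tr P.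
Proof. by move=> posP; rewrite mxtrace_mx2 addr_gt0 ?posdef2_diag_gt0. Qed.

(* Evaluate the form at [(-P01, P00)], which gives [P00 * det P]. *)
Lemma posdef2_det_gt0 {P} : hermitian2 P -> posdef2 P -> 0 < \det P.
Proof.
move=> hermP posP; have P00_gt0 := posdef2_diag_gt0 0 posP.
pose v : 'cV[R[i]]_2 := \col_i (if i == 0 then - P 0 1 else P 0 0).
have /posP : v != 0.
  by apply/eqP => /matrixP /(_ 1 0); rewrite !mxE /=; apply/eqP; rewrite gt_eqF.
have P00J : (P 0 0)^* = P 0 0 by rewrite -ctmxE hermP.
have P01J : (P 0 1)^* = P 1 0 by rewrite -ctmxE hermP.
rewrite !mulmx2E !ctmxE !mxE /= rmorphN /= P00J P01J.
rewrite [X in 0 < X -> _](_ : _ = P 0 0 * \det P) ?pmulr_rgt0 // det_mx2; ring.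
Qed.

End TwoByTwo.

Theorem lemma2p1 (R : rcfType) (A P U : 'M[R[i]]_2) :
  \det A = 1 -> hermitian2 P -> posdef2 P -> unitary2 U -> A = P *m U ->
  (exists r : R, r != 0 /\ A + ctmx (cmx A) = r%:C *: U) /\ \det U = 1.
Proof.
move=> detA1 hermP posP unitU defA.
have detU_gt0 : 0 < \det U.
  by rewrite -(pmulr_rgt0 _ (posdef2_det_gt0 hermP posP)) -det_mulmx -defA detA1.
have detU1 : \det U = 1 by rewrite -(ger0_norm (ltW detU_gt0)) normr_det_unitary2.
have trP_gt0 := posdef2_mxtrace_gt0 posP.
have trP_real : (complex.Re (\tr P))%:C = \tr P by rewrite RRe_real ?gtr0_real.
split=> //; exists (complex.Re (\tr P)); split.
  by rewrite -(inj_eq (@complexI R)) trP_real gt_eqF.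
rewrite trP_real -mul_scalar_mx -addmx_cmx mulmxDl defA.
by rewrite ctmx_cmx_mul_hermitian2 // cmx_unitary2.
Qed.
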